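(* Let $a$ be a complex number of modulus one and let $H$ be a $6\times 6$ complex Hadamard matrix all of whose entries lie in $\{1,a,a^2\}$. Then $H$ is complex equivalent to the Tao matrix $S_6^{(0)}$ or to the matrix $H^{(1)}$, where, with $\omega=e^{2\pi i/3}$, $$S_6^{(0)}=\begin{bmatrix} 1&1&1&1&1&1\\ 1&1&\omega&\omega&\omega^2&\omega^2\\ 1&\omega&1&\omega^2&\omega^2&\omega\\ 1&\omega&\omega^2&1&\omega&\omega^2\\ 1&\omega^2&\omega^2&\omega&1&\omega\\ 1&\omega^2&\omega&\omega^2&\omega&1 \end{bmatrix},\qquad H^{(1)}=\begin{bmatrix} i&1&1&1&1&1\\ 1&i&1&1&-1&-1\\ 1&1&i&-1&1&-1\\ 1&1&-1&i&-1&1\\ 1&-1&1&-1&i&1\\ 1&-1&-1&1&1&i \end{bmatrix}.$$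
   Context: A complex Hadamard matrix (CHM) of order $n$ is an $n\times n$ complex matrix $H$ all of whose entries have modulus one and which satisfies $HH^\dagger=nI$. A monomial unitary matrix is a unitary matrix each of whose rows and columns has exactly one nonzero entry, that entry having modulus one. Two $n\times n$ matrices $U,V$ are complex equivalent if $U=PVQ$ for some $n\times n$ monomial unitary matrices $P,Q$. *)

From HB Require Import structures.
From mathcomp Require Import all_boot all_order all_algebra.
From mathcomp Require Import all_reals.
From mathcomp Require Import complex.
Set Implicit Arguments. Unset Strict Implicit. Unset Printing Implicit Defensive.
Import Order.TTheory GRing.Theory Num.Theory.
Local Open Scope ring_scope.
Local Open Scope complex_scope.

Section Defs.
Variable R : realType.
Local Notation C := R[i].

Definition adjmx m n (A : 'M[C]_(m, n)) : 'M[C]_(n, m) := (map_mx Num.conj A)^T.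

Definition is_CHM n (H : 'M[C]_n) : Prop :=
  (forall i j, `|H i j| = 1) /\ H *m adjmx H = n%:R%:M.

Definition monomial_unitary n (P : 'M[C]_n) : Prop :=
  [/\ P *m adjmx P = 1%:M,
      forall i, #|[set j | P i j != 0]| = 1%N,
      forall j, #|[set i | P i j != 0]| = 1%N &
      forall i j, P i j != 0 -> `|P i j| = 1].

Definition complex_equiv n (U V : 'M[C]_n) : Prop :=
  exists P Q : 'M[C]_n, [/\ monomial_unitary P, monomial_unitary Q & U = P *m V *m Q].

(* omega = e^{2 pi i/3} = -1/2 + i sqrt(3)/2 *)
Definition omega : C := (- 2^-1) +i* (Num.sqrt 3 / 2).

Definition mx6_of_seq (s : seq (seq C)) : 'M[C]_6 :=
  \matrix_(i < 6, j < 6) nth 0 (nth [::] s i) j.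

Definition S6_exps : seq (seq nat) :=
  [:: [:: 0; 0; 0; 0; 0; 0];
      [:: 0; 0; 1; 1; 2; 2];
      [:: 0; 1; 0; 2; 2; 1];
      [:: 0; 1; 2; 0; 1; 2];
      [:: 0; 2; 2; 1; 0; 1];
      [:: 0; 2; 1; 2; 1; 0]]%N.

Definition S6_0 : 'M[C]_6 :=
  mx6_of_seq [seq [seq omega ^+ e | e <- r] | r <- S6_exps].

Definition H6_1 : 'M[C]_6 :=
  mx6_of_seq
  [:: [::  'i;  1;  1;  1;  1;  1];
      [::  1;  'i;  1;  1; -1; -1];
      [::  1;  1;  'i; -1;  1; -1];
      [::  1;  1; -1;  'i; -1;  1];
      [::  1; -1;  1; -1;  'i;  1];
      [::  1; -1; -1;  1;  1;  'i]].

End Defs.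

From HB Require Import structures.
From mathcomp Require Import all_boot all_order all_algebra.
From mathcomp Require Import all_reals.
From mathcomp Require Import complex.
From mathcomp Require Import ring lra zify.
Set Implicit Arguments. Unset Strict Implicit. Unset Printing Implicit Defensive.
Import Order.TTheory GRing.Theory Num.Theory.
Local Open Scope ring_scope.
Local Open Scope complex_scope.

(* Write the entries as a ^+ E i j with E i j in {0, 1, 2} and a = x + iy.
   Orthogonality of two rows is a pair of real equations in x and y whose
   coefficients count the differences E r j - E s j.  For y = 0 the parity of
   these counts over three rows is contradictory.  Otherwise the imaginary
   part fixes x as a ratio of counts, and a finite check leaves the cosines
   0, -1/2, 1/4 and 1/2; the last two are ruled out by double counting equal
   entries within columns.  So a is a primitive fourth or third root of unity,
   and an exhaustive reflective search over dephased matrices of such powers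
   with orthogonal rows shows that each is obtained from H^(1) resp. S_6^(0)
   by permuting rows and columns and rescaling them by phases. *)

Section MonomialEquivalence.
Variables (R : realType) (n : nat).
Local Notation C := R[i].

Lemma adjmxE m p (A : 'M[C]_(m, p)) i j : adjmx A i j = Num.conj (A j i).
Proof. by rewrite !mxE. Qed.

Lemma mul_conj_norm1 (z : C) : `|z| = 1 -> z * Num.conj z = 1.
Proof. by move=> z1; rewrite -normCK z1 expr1n. Qed.

Lemma norm1_neq0 (z : C) : `|z| = 1 -> z != 0.
Proof. by move=> z1; rewrite -normr_gt0 z1 ltr01. Qed.

Lemma CHM_orth_rows (H : 'M[C]_n) r s :
  is_CHM H -> r != s -> \sum_j H r j * Num.conj (H s j) = 0.
Proof.
case=> _ /matrixP/(_ r s) HH rs; move: HH; rewrite !mxE (negbTE rs) mulr0n => HH.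
by rewrite -[RHS]HH; apply: eq_bigr => j _; rewrite !mxE.
Qed.

Lemma orth_rows_scale (A : 'I_n -> 'I_n -> C) (al be : 'I_n -> C) r s :
  (forall j, `|be j| = 1) ->
  \sum_j (al r * be j * A r j) * Num.conj (al s * be j * A s j)
  = al r * Num.conj (al s) * \sum_j A r j * Num.conj (A s j).
Proof.
move=> be1; rewrite mulr_sumr; apply: eq_bigr => j _; rewrite !rmorphM /=.
have := mul_conj_norm1 (be1 j); set b := be j => bb.
by transitivity (al r * Num.conj (al s) * (A r j * Num.conj (A s j)) * (b * Num.conj b));
  [ring | rewrite bb mulr1].
Qed.

Definition perm_diag_mx (s : 'I_n -> 'I_n) (u : 'I_n -> C) : 'M[C]_n :=
  \matrix_(i, k) (if k == s i then u i else 0).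

Lemma monomial_unitary_perm_diag s u :
  injective s -> (forall i, `|u i| = 1) -> monomial_unitary (perm_diag_mx s u).
Proof.
move=> s_inj u1; have u0 i := norm1_neq0 (u1 i).
split.
- apply/matrixP => i j; rewrite !mxE (bigD1 (s i)) //= big1 => [|k /negbTE nk].
    rewrite adjmxE !mxE eqxx addr0.
    case: (eqVneq i j) => [<-|nij]; first by rewrite eqxx mul_conj_norm1.
    by rewrite (inj_eq s_inj) (negbTE nij) conjC0 mulr0.
  by rewrite !mxE nk mul0r.
- move=> i; rewrite (_ : [set j | _] = [set s i]) ?cards1 //; apply/setP => k.
  by rewrite !inE !mxE; case: (k == s i); rewrite ?u0 ?eqxx.
- move=> k; rewrite -(f_invF s_inj k); set i := invF s_inj k.
  rewrite (_ : [set i0 | _] = [set i]) ?cards1 //; apply/setP => i'.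
  by rewrite !inE !mxE (inj_eq s_inj) [i == i']eq_sym; case: (i' == i); rewrite ?u0 ?eqxx.
- by move=> i k; rewrite mxE; case: (k == s i); rewrite ?eqxx.
Qed.

Lemma monomial_unitary_tr (A : 'M[C]_n) :
  monomial_unitary A -> monomial_unitary A^T.
Proof.
case=> AA rowA colA normA; split.
- have -> : adjmx A^T = (adjmx A)^T by apply/matrixP => i j; rewrite !mxE.
  by rewrite -trmx_mul (mulmx1C AA) trmx1.
- by move=> i; rewrite -[RHS](colA i); apply: eq_card => j; rewrite !inE mxE.
- by move=> j; rewrite -[RHS](rowA j); apply: eq_card => i; rewrite !inE mxE.
- by move=> i j; rewrite !mxE; apply: normA.
Qed.

Definition expmx (z : C) (F : 'I_n -> 'I_n -> nat) : 'M[C]_n :=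
  \matrix_(i, j) z ^+ F i j.

Lemma CHM_expmx_orth (z : C) F r s : is_CHM (expmx z F) -> r != s ->
  \sum_j z ^+ F r j * Num.conj (z ^+ F s j) = 0.
Proof.
move=> CHM rs; rewrite -[RHS](CHM_orth_rows CHM rs).
by apply: eq_bigr => j _; rewrite !mxE.
Qed.

Lemma expmx_of_entries (a : C) (H : 'M[C]_n) :
  (forall i j, H i j \in [:: 1; a; a ^+ 2]) ->
  exists2 E, (forall i j, (E i j < 3)%N) & H = expmx a E.
Proof.
move=> entries; exists (fun i j => index (H i j) [:: 1; a; a ^+ 2]) => [i j|].
  by rewrite index_mem.
apply/matrixP => i j; rewrite mxE; have := entries i j; rewrite -index_mem.
move: (nth_index 0 (entries i j)).
by case: index => [|[|[|?]]] //= <-; rewrite ?expr0 ?expr1.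
Qed.

Lemma expmx_pow (z : C) m k F :
  z ^+ m = 1 -> expmx (z ^+ k) F = expmx z (fun i j => (k * F i j) %% m)%N.
Proof. by move=> zm; apply/matrixP => i j; rewrite !mxE -exprM expr_mod. Qed.

Lemma complex_equiv_expmx (z : C) m (F T : 'I_n -> 'I_n -> nat)
    (s t : 'I_n -> 'I_n) (u v : 'I_n -> nat) :
  `|z| = 1 -> z ^+ m = 1 -> injective s -> injective t ->
  (forall i j, F i j = T (s i) (t j) + u i + v j %[mod m])%N ->
  complex_equiv (expmx z F) (expmx z T).
Proof.
move=> z1 zm s_inj t_inj FT.
have zk1 k : `|z ^+ k| = 1 by rewrite normrX z1 expr1n.
exists (perm_diag_mx s (fun i => z ^+ u i)), (perm_diag_mx t (fun j => z ^+ v j))^T.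
split; [exact: monomial_unitary_perm_diag |
        exact/monomial_unitary_tr/monomial_unitary_perm_diag |].
apply/matrixP => i j; rewrite !mxE (bigD1 (t j)) //= big1 => [|l /negbTE nl]; last first.
  by rewrite !mxE nl mulr0.
rewrite !mxE eqxx addr0 (bigD1 (s i)) //= big1 => [|k /negbTE nk]; last first.
  by rewrite !mxE nk mul0r.
rewrite !mxE eqxx addr0 -(expr_mod (F i j) zm) FT expr_mod // !exprD.
by rewrite [z ^+ T _ _ * _]mulrC.
Qed.

End MonomialEquivalence.

Lemma sum_by_value (V : nmodType) (I : eqType) (r : seq I) (g : I -> nat)
    (F : nat -> V) k :
  {in r, forall j, g j < k}%N ->
  \sum_(j <- r) F (g j) = \sum_(v < k) F v *+ (\sum_(j <- r) (g j == v))%N.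
Proof.
elim: r => [|j r IH] gk.
  by rewrite big_nil big1 // => v _; rewrite big_nil mulr0n.
rewrite big_cons IH => [|x xr]; last by apply: gk; rewrite inE xr orbT.
under [RHS]eq_bigr => v _ do rewrite big_cons mulrnDr.
rewrite big_split /=; congr (_ + _).
have gjk : (g j < k)%N by apply: gk; rewrite mem_head.
rewrite (bigD1 (Ordinal gjk)) //= eqxx mulr1n big1 ?addr0 // => v nv.
suff /negbTE-> : g j != v by rewrite mulr0n.
by apply: contra nv => /eqP gjv; apply/eqP/val_inj.
Qed.

Lemma sum_mult_size (I : eqType) (r : seq I) (g : I -> nat) k :
  {in r, forall j, g j < k}%N -> (\sum_(v < k) \sum_(j <- r) (g j == v))%N = size r.
Proof.
move=> gk; rewrite -sum1_size (sum_by_value (fun=> 1%N) gk).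
by apply: eq_bigr => v _; rewrite natn.
Qed.

Fixpoint tuples (k m : nat) : seq (seq nat) :=
  if k is k'.+1 then [seq x :: t | x <- iota 0 m, t <- tuples k' m] else [:: [::]].

Lemma mem_tuples k m t :
  size t = k -> all (fun x => x < m)%N t -> t \in tuples k m.
Proof.
elim: k t => [|k IH] [|x t] //= [sz] /andP[xm tm].
by apply: allpairs_f; [rewrite mem_iota | exact: IH].
Qed.

Section ComplexFacts.
Variable R : realType.
Local Notation C := R[i].

Lemma ReD (z w : C) : complex.Re (z + w) = complex.Re z + complex.Re w.
Proof. by case: z; case: w. Qed.

Lemma ImD (z w : C) : complex.Im (z + w) = complex.Im z + complex.Im w.
Proof. by case: z; case: w. Qed.

Lemma Re_natrM k (z : C) : complex.Re (k%:R * z) = k%:R * complex.Re z.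
Proof. by case: z => p q; rewrite -(rmorph_nat (real_complex R)) /= mul0r subr0. Qed.

Lemma Im_natrM k (z : C) : complex.Im (k%:R * z) = k%:R * complex.Im z.
Proof. by case: z => p q; rewrite -(rmorph_nat (real_complex R)) /= mul0r addr0. Qed.

Lemma unit_circle_mul_conj (x y : R) :
  x ^+ 2 + y ^+ 2 = 1 -> (x +i* y) * Num.conj (x +i* y) = 1.
Proof.
move=> xy1; rewrite [RHS](_ : 1 = 1 +i* 0) //=; congr (_ +i* _); last by ring.
by rewrite -xy1; ring.
Qed.

Lemma sqr_sqrt3 : Num.sqrt (3 : R) ^+ 2 = 3.
Proof. by rewrite sqr_sqrtr // ler0n. Qed.

Lemma omega2 : omega R ^+ 2 = (- 2^-1) +i* (- (Num.sqrt 3 / 2)).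
Proof.
rewrite /omega expr2 /=; congr (_ +i* _); last by field.
transitivity (4^-1 - Num.sqrt 3 ^+ 2 / 4 : R); first by field.
by rewrite sqr_sqrt3; field.
Qed.

Lemma i3 : ('i : C) ^+ 3 = 0 +i* (-1).
Proof. by rewrite !exprS expr0 /=; congr (_ +i* _); ring. Qed.

Lemma norm_omega : `|omega R| = 1.
Proof.
rewrite normc_def /omega /=.
have -> : (- 2^-1 : R) ^+ 2 + (Num.sqrt 3 / 2) ^+ 2 = 1.
  transitivity (4^-1 + Num.sqrt 3 ^+ 2 / 4 : R); first by field.
  by rewrite sqr_sqrt3; field.
by rewrite sqrtr1.
Qed.

Lemma omega3 : omega R ^+ 3 = 1.
Proof.
rewrite exprS omega2 /omega /= [RHS](_ : 1 = 1 +i* 0) //.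
congr (_ +i* _); last by field.
transitivity (4^-1 + Num.sqrt 3 ^+ 2 / 4 : R); first by field.
by rewrite sqr_sqrt3; field.
Qed.

Lemma norm_i : `|'i : C| = 1.
Proof. by rewrite normc_def /= expr0n add0r expr1n sqrtr1. Qed.

Lemma i4 : ('i : C) ^+ 4 = 1.
Proof. by rewrite (exprM _ 2 2) sqr_i sqrrN expr1n. Qed.

End ComplexFacts.

Section RowPairs.
Variable E : 'I_6 -> 'I_6 -> nat.
Hypothesis E_lt3 : forall i j, (E i j < 3)%N.

Definition diff_count r s k := (\sum_(j < 6) (E r j + 2 - E s j == k))%N.

Lemma diff_count_sum r s :
  (diff_count r s 0 + diff_count r s 1 + diff_count r s 2 + diff_count r s 3
   + diff_count r s 4 = 6)%N.
Proof.
rewrite /diff_count -!big_split /= -[RHS]card_ord -sum1_card; apply: eq_bigr => j _.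
have := E_lt3 r j; have := E_lt3 s j.
by case: (E r j) => [|[|[|?]]] //; case: (E s j) => [|[|[|?]]].
Qed.

Lemma diff_count_diag r :
  [/\ diff_count r r 2 = 6, diff_count r r 0 = 0 & diff_count r r 4 = 0]%N.
Proof.
rewrite /diff_count; split.
- by rewrite (eq_bigr (fun=> 1%N)) ?sum1_card ?card_ord // => j _; rewrite addKn.
- by rewrite big1 // => j _; rewrite addKn.
- by rewrite big1 // => j _; rewrite addKn.
Qed.

End RowPairs.

Section RowPairEquations.
Variables (R : realType) (E : 'I_6 -> 'I_6 -> nat).
Hypothesis E_lt3 : forall i j, (E i j < 3)%N.
Local Notation C := R[i].
(* [pow_offset a k = a ^ (k - 2)] on the unit circle, where [a^-1 = a^*]. *)
Definition pow_offset (a : C) k :=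
  nth 0 [:: Num.conj a ^+ 2; Num.conj a; 1; a; a ^+ 2] k.

Lemma pow_mul_conj_offset (a : C) e f :
  a * Num.conj a = 1 -> (e < 3)%N -> (f < 3)%N ->
  a ^+ e * Num.conj (a ^+ f) = pow_offset a (e + 2 - f).
Proof.
move=> aa; rewrite rmorphXn /pow_offset.
case: e => [|[|[|e]]] // _; case: f => [|[|[|f]]] // _ /=;
  rewrite ?expr0 ?expr1 ?mul1r ?mulr1 //.
- by rewrite expr2 mulrA aa mul1r.
- by rewrite expr2 -mulrA aa mulr1.
- by rewrite !expr2 mulrACA aa mulr1.
Qed.

Lemma row_pair_eqs (x y : R) r s :
  x ^+ 2 + y ^+ 2 = 1 ->
  \sum_(j < 6) (x +i* y) ^+ E r j * Num.conj ((x +i* y) ^+ E s j) = 0 ->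
  (diff_count E r s 2)%:R + ((diff_count E r s 1)%:R + (diff_count E r s 3)%:R) * x
    + ((diff_count E r s 0)%:R + (diff_count E r s 4)%:R) * (x ^+ 2 - y ^+ 2) = 0
  /\ ((diff_count E r s 3)%:R - (diff_count E r s 1)%:R) * y
    + ((diff_count E r s 4)%:R - (diff_count E r s 0)%:R) * (2 * x * y) = 0.
Proof.
move=> xy1; set a := x +i* y; have aa := unit_circle_mul_conj xy1.
under eq_bigr => j _ do rewrite (pow_mul_conj_offset aa (E_lt3 r j) (E_lt3 s j)).
rewrite (@sum_by_value _ _ _ (fun j => E r j + 2 - E s j)%N (pow_offset a) 5);
  last by move=> j _ /=; have := E_lt3 r j; lia.
under eq_bigr => v _ do rewrite -mulr_natl -/(diff_count E r s v).
rewrite !big_ord_recl big_ord0 /= => sum0.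
split.
- have := congr1 (@complex.Re R) sum0; rewrite !ReD !Re_natrM /= => {}sum0.
  by rewrite -[RHS]sum0; ring.
- have := congr1 (@complex.Im R) sum0; rewrite !ImD !Im_natrM /= => {}sum0.
  by rewrite -[RHS]sum0; ring.
Qed.

End RowPairEquations.

(* With x = N / 2D forced by the imaginary part, the real part times 2D^2
   is the polynomial below; 4D^2 <= N^2 means |x| >= 1. *)
Definition cos_admissible (c : seq nat) : bool :=
  if c is [:: c0; c1; c2; c3; c4] then
    let N := c1%:Z - c3%:Z in let D := c4%:Z - c0%:Z in
    (2 * c2%:Z * D ^+ 2 + (c1%:Z + c3%:Z) * N * D
       + (c0%:Z + c4%:Z) * (N ^+ 2 - 2 * D ^+ 2) == 0)
    ==> [|| N == 0, N == - D, 2 * N == D, N == D | 4 * D ^+ 2 <= N ^+ 2]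
  else true.

Lemma cos_admissible_tuples :
  all cos_admissible [seq c <- tuples 5 7 | sumn c == 6%N].
Proof. by vm_compute. Qed.

Section CosineCases.
Variable R : realType.

Lemma cos_cases_balanced (x : R) (c0 c1 c2 : nat) :
  (2 * c0 + 2 * c1 + c2 = 6)%N -> (0 < c2)%N -> -1 < x < 1 ->
  c2%:R + 2 * c1%:R * x + 2 * c0%:R * (2 * x ^+ 2 - 1) = 0 ->
  [\/ x = 0, x = - 2^-1, x = 4^-1 | x = 2^-1].
Proof.
move=> sum6 c2_gt0 /andP[x_gt x_lt]; have [c0_le2 c1_le2] : (c0 <= 2 /\ c1 <= 2)%N by lia.
move: c0 c1 c2 sum6 c2_gt0 c0_le2 c1_le2.
move=> [|[|[|?]]] [|[|[|?]]] [|[|[|[|[|[|[|?]]]]]]] //= _ _ _ _ eq0.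
- by exfalso; lra.
- by exfalso; lra.
- by apply: Or42; lra.
- by exfalso; nra.
- have : x * (2 * x + 1) = 0 by lra.
  by move/eqP; rewrite mulf_eq0 => /orP[/eqP->|/eqP ?]; [apply: Or41 | apply: Or42; lra].
- have : (2 * x - 1) * (2 * x + 1) = 0 by lra.
  by move/eqP; rewrite mulf_eq0 => /orP[/eqP ?|/eqP ?]; [apply: Or44 | apply: Or42]; lra.
Qed.

Lemma cos_cases (x : R) (c0 c1 c2 c3 c4 : nat) :
  (c0 + c1 + c2 + c3 + c4 = 6)%N -> (0 < c2)%N -> -1 < x < 1 ->
  c2%:R + (c1%:R + c3%:R) * x + (c0%:R + c4%:R) * (2 * x ^+ 2 - 1) = 0 ->
  c3%:R - c1%:R + (c4%:R - c0%:R) * (2 * x) = 0 ->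
  [\/ x = 0, x = - 2^-1, x = 4^-1 | x = 2^-1].
Proof.
move=> sum6 c2_gt0 x_bd e1 e2; have /andP[x_gt x_lt] := x_bd.
have [c40|c40] := eqVneq c4 c0.
  subst c4; have c31 : c3 = c1 by apply/eqP; rewrite -(eqr_nat R); apply/eqP; lra.
  subst c3; apply: (@cos_cases_balanced x c0 c1 c2) => //; [lia | lra].
have : cos_admissible [:: c0; c1; c2; c3; c4].
  apply: (allP cos_admissible_tuples); rewrite mem_filter.
  apply/andP; split; first by apply/eqP => /=; lia.
  by apply: mem_tuples => //=; rewrite !andbT; repeat (apply/andP; split); lia.
set N : R := c1%:R - c3%:R; set D : R := c4%:R - c0%:R.
have D0 : D != 0 by rewrite subr_eq0 eqr_nat.
have D2_gt0 : 0 < D ^+ 2 by rewrite lt_def sqrf_eq0 D0 sqr_ge0.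
have ND : N = D * (2 * x) by rewrite /N /D; lra.
move=> /implyP; rewrite /= -(intr_eq0 R) -!(eqr_int R) -(ler_int R).
rewrite !(rmorphM, rmorphB, rmorphD, rmorphXn, rmorphN) /= -!pmulrn -/N -/D.
rewrite [_ == 0](_ : _ = true); last first.
  by apply/eqP; rewrite ND -(mulr0 (2 * D ^+ 2)) -[X in 2 * D ^+ 2 * X]e1; ring.
have cancelD v w : D * v = D * w -> v = w by apply: mulfI.
move=> /(_ isT) /orP[|/orP[|/orP[|/orP[]]]] /eqP; rewrite ND.
- by move=> /eqP; rewrite mulf_eq0 (negbTE D0) => /eqP ?; apply: Or41; lra.
- by rewrite -mulrN1 => /cancelD ?; apply: Or42; lra.
- by rewrite mulrCA -[D in RHS]mulr1 => /cancelD ?; apply: Or43; lra.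
- by rewrite -[D in RHS]mulr1 => /cancelD ?; apply: Or44; lra.
- move=> /eqP D2; have x2_lt1 : x ^+ 2 < 1 by nra.
  by exfalso; clear -D2 D2_gt0 x2_lt1; nra.
Qed.

End CosineCases.

Section CoincidenceCounting.
Variable E : 'I_6 -> 'I_6 -> nat.
Hypothesis E_lt3 : forall i j, (E i j < 3)%N.
Local Open Scope nat_scope.

Definition col_count j v := \sum_(r < 6) (E r j == v).

Lemma col_count_sum j : col_count j 0 + col_count j 1 + col_count j 2 = 6.
Proof.
rewrite /col_count -!big_split /= -[RHS]card_ord -sum1_card; apply: eq_bigr => r _.
by have := E_lt3 r j; case: (E r j) => [|[|[|?]]].
Qed.

Lemma sumn_by_value p k (g : 'I_p -> nat) (F : nat -> nat) : (forall j, g j < k) ->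
  \sum_(j < p) F (g j) = \sum_(v < k) (\sum_(j < p) (g j == v)) * F v.
Proof.
move=> gk; rewrite (@sum_by_value _ _ _ g F k) => [|j _]; last exact: gk.
by apply: eq_bigr => v _; rewrite -mulr_natr natn mulnC.
Qed.

Lemma sum_pairs_by_columns (phi : nat -> nat -> nat) :
  \sum_(r < 6) \sum_(s < 6) \sum_(j < 6) phi (E r j) (E s j) =
  \sum_(j < 6) \sum_(w < 3) col_count j w * \sum_(v < 3) col_count j v * phi v w.
Proof.
under eq_bigr => r _ do rewrite exchange_big.
rewrite exchange_big; apply: eq_bigr => j _.
under eq_bigr => r _ do rewrite (sumn_by_value (k := 3) (fun w => phi (E r j) w)) //.
rewrite exchange_big; apply: eq_bigr => w _.
by rewrite -big_distrr /= (sumn_by_value (k := 3) (fun v => phi v w)).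
Qed.

Lemma sqr_sum6_ge12 a b c : a + b + c = 6 -> 12 <= a * a + b * b + c * c.
Proof.
move=> abc; have [a_le6 b_le6] : a <= 6 /\ b <= 6 by lia.
by move: a b a_le6 b_le6 abc => [|[|[|[|[|[|[|?]]]]]]] [|[|[|[|[|[|[|?]]]]]]] //; lia.
Qed.

Lemma mul4_le_sqr_sum6 a b c : a + b + c = 6 -> 4 * (a * c) <= a * a + b * b + c * c + 18.
Proof.
move=> abc; have [a_le6 b_le6] : a <= 6 /\ b <= 6 by lia.
by move: a b a_le6 b_le6 abc => [|[|[|[|[|[|[|?]]]]]]] [|[|[|[|[|[|[|?]]]]]]] //; lia.
Qed.

Lemma offset_eq2 a b : (a + 2 - b == 2) = (a == b).
Proof. by apply/eqP/eqP; lia. Qed.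

Lemma sum_off_diag_const (r : 'I_6) k : \sum_(s < 6 | s != r) k = 5 * k.
Proof. by rewrite (eq_bigl (mem (predC1 r))) // sum_nat_const cardC1 card_ord. Qed.

(* A column with value counts (a, b, c) contains a^2 + b^2 + c^2 >= 12
   coincident ordered pairs, so at least 72 in all, while single
   coincidences give only 6 * 6 + 30 = 66. *)
Lemma not_all_single_coincidences :
  ~ (forall r s, r != s -> diff_count E r s 2 = 1).
Proof.
move=> single.
have total : \sum_(r < 6) \sum_(s < 6) diff_count E r s 2 = 66.
  rewrite (eq_bigr (fun=> 11)) ?sum_nat_const ?card_ord // => r _.
  have [d2 _ _] := diff_count_diag E r; rewrite (bigD1 r) //= d2.
  by rewrite (eq_bigr (fun=> 1)) ?sum_off_diag_const // => s sr; rewrite single // eq_sym.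
have pairs : \sum_(r < 6) \sum_(s < 6) \sum_(j < 6) (E r j == E s j) = 66.
  rewrite -total; apply: eq_bigr => r _; apply: eq_bigr => s _.
  by apply: eq_bigr => j _; rewrite offset_eq2.
have : 72 <= \sum_(j < 6) \sum_(w < 3) col_count j w *
                \sum_(v < 3) col_count j v * (v == w).
  rewrite (_ : 72 = \sum_(j < 6) 12); last by rewrite sum_nat_const card_ord.
  apply: leq_sum => j _; have := col_count_sum j.
  rewrite !big_ord_recl !big_ord0 !lift0 /= => /sqr_sum6_ge12; lia.
by rewrite -(sum_pairs_by_columns (fun v w => (v == w) : nat)) pairs.
Qed.

Lemma offset_eq04 a b : a < 3 -> b < 3 ->
  (a + 2 - b == 0) + (a + 2 - b == 4) = ((a == 0) && (b == 2)) + ((a == 2) && (b == 0)).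
Proof. by case: a => [|[|[|a]]] //; case: b => [|[|[|b]]]. Qed.

(* A column with value counts (a, b, c) has 2ac ordered pairs with
   difference +-2, and 4ac <= a^2 + b^2 + c^2 + 18 falls short of the
   surplus of 24 per column that the balance would force. *)
Lemma not_all_half_balanced :
  ~ (forall r s, r != s ->
       2 * (diff_count E r s 0 + diff_count E r s 4) = diff_count E r s 2 + 6).
Proof.
move=> balanced.
have total : \sum_(r < 6) \sum_(s < 6) 2 * (diff_count E r s 0 + diff_count E r s 4)
           = \sum_(r < 6) \sum_(s < 6) diff_count E r s 2 + 144.
  rewrite (_ : 144 = \sum_(r < 6) 24); last by rewrite sum_nat_const card_ord.
  rewrite -big_split /=; apply: eq_bigr => r _.
  rewrite (bigD1 r) //= [in RHS](bigD1 r) //= (eq_bigr (fun s => diff_count E r s 2 + 6));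
    last by move=> s sr; apply: balanced; rewrite eq_sym.
  have [d2 d0 d4] := diff_count_diag E r.
  by rewrite big_split /= sum_off_diag_const d2 d0 d4; lia.
pose phi v w := 2 * (((v == 0) && (w == 2)) + ((v == 2) && (w == 0))).
have phiE r s : 2 * (diff_count E r s 0 + diff_count E r s 4)
              = \sum_(j < 6) phi (E r j) (E s j).
  rewrite /diff_count -big_split /= big_distrr; apply: eq_bigr => j _.
  by rewrite /phi offset_eq04.
have eqE r s : diff_count E r s 2 = \sum_(j < 6) (E r j == E s j).
  by apply: eq_bigr => j _; rewrite offset_eq2.
move: total.
under eq_bigr => r _ do under eq_bigr => s _ do rewrite phiE.
under [X in _ = X + _]eq_bigr => r _ do under eq_bigr => s _ do rewrite eqE.
rewrite (sum_pairs_by_columns phi) (sum_pairs_by_columns (fun v w => (v == w) : nat)).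
have : \sum_(j < 6) \sum_(w < 3) col_count j w * \sum_(v < 3) col_count j v * phi v w
    <= \sum_(j < 6) (\sum_(w < 3) col_count j w *
                        \sum_(v < 3) col_count j v * (v == w) + 18).
  apply: leq_sum => j _; have := col_count_sum j.
  by rewrite !big_ord_recl !big_ord0 !lift0 /phi /= => /mul4_le_sqr_sum6; lia.
rewrite big_split /= sum_nat_const card_ord => le_bound total.
by move: le_bound; rewrite total leq_add2l.
Qed.

(* Among three entries of a column an even number of pairs differ by an odd
   amount, whereas three pairs with three odd differences each give nine. *)
Lemma not_all_three_odd_differences :
  ~ (forall r s, r != s -> diff_count E r s 1 + diff_count E r s 3 = 3).
Proof.
move=> odd3.
pose odd_diff a b := (a + 2 - b == 1) + (a + 2 - b == 3).
have odd_sum r s : r != s -> \sum_(j < 6) odd_diff (E r j) (E s j) = 3.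
  by move=> rs; rewrite big_split /= -[RHS](odd3 r s rs).
pose r0 : 'I_6 := ord0.
pose r1 : 'I_6 := Ordinal (isT : 1 < 6); pose r2 : 'I_6 := Ordinal (isT : 2 < 6).
pose col_odd j := odd_diff (E r0 j) (E r1 j) + odd_diff (E r0 j) (E r2 j)
                  + odd_diff (E r1 j) (E r2 j).
have even_col j : ~~ odd (col_odd j).
  move: (E_lt3 r0 j) (E_lt3 r1 j) (E_lt3 r2 j); rewrite /col_odd /odd_diff.
  by case: (E r0 j) => [|[|[|?]]] //; case: (E r1 j) => [|[|[|?]]] //;
     case: (E r2 j) => [|[|[|?]]].
have : ~~ odd (\sum_(j < 6) col_odd j).
  apply: (big_ind (fun n => ~~ odd n)) => [//|m n|j _]; last exact: even_col.
  by rewrite oddD => /negbTE-> /negbTE->.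
by rewrite /col_odd 2!big_split !odd_sum.
Qed.

Lemma exists_coincident_pair : exists r s, r != s /\ 0 < diff_count E r s 2.
Proof.
pose f r : 'I_3 := Ordinal (E_lt3 r ord0).
have [r [s rs /(congr1 val) /= frs]] : exists r, exists2 s, r != s & f r = f s.
  by apply/injectivePn/injectiveP => /leq_card; rewrite !card_ord.
by exists r, s; split; rewrite // /diff_count (bigD1 ord0) //= frs addKn eqxx.
Qed.

End CoincidenceCounting.

Section OrthogonalExponentRows.
Variables (R : realType) (E : 'I_6 -> 'I_6 -> nat) (x y : R).
Hypothesis E_lt3 : forall i j, (E i j < 3)%N.
Hypothesis xy1 : x ^+ 2 + y ^+ 2 = 1.
Hypothesis orth : forall r s, r != s ->
  \sum_(j < 6) (x +i* y) ^+ E r j * Num.conj ((x +i* y) ^+ E s j) = 0.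

Lemma diff_count_sumR r s :
  (diff_count E r s 0)%:R + (diff_count E r s 1)%:R + (diff_count E r s 2)%:R
  + (diff_count E r s 3)%:R + (diff_count E r s 4)%:R = 6 :> R.
Proof. by rewrite -!natrD diff_count_sum. Qed.

Lemma orth_cos_eq r s : r != s ->
  (diff_count E r s 2)%:R + ((diff_count E r s 1)%:R + (diff_count E r s 3)%:R) * x
  + ((diff_count E r s 0)%:R + (diff_count E r s 4)%:R) * (2 * x ^+ 2 - 1) = 0.
Proof.
move=> rs; have [e1 _] := row_pair_eqs E_lt3 xy1 (orth rs).
by rewrite -[RHS]e1 (_ : 2 * x ^+ 2 - 1 = x ^+ 2 - y ^+ 2) //; move: xy1; lra.
Qed.

Lemma orth_sin_eq r s : r != s -> y != 0 ->
  (diff_count E r s 3)%:R - (diff_count E r s 1)%:R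
  + ((diff_count E r s 4)%:R - (diff_count E r s 0)%:R) * (2 * x) = 0.
Proof.
move=> rs y_neq0; have [_ e2] := row_pair_eqs E_lt3 xy1 (orth rs).
by apply: (mulfI y_neq0); rewrite mulr0 -[RHS]e2; ring.
Qed.

(* For a = 1 orthogonality fails outright; for a = -1 every pair of rows
   would have exactly three odd exponent differences. *)
Lemma orth_exps_nonreal : y != 0.
Proof.
apply/eqP => y0; have /eqP := xy1.
rewrite y0 expr0n addr0 -(expr1n R 2) eqf_sqr => /orP[/eqP x1|/eqP xN1].
  pose r1 : 'I_6 := Ordinal (isT : (1 < 6)%N).
  have := orth_cos_eq (isT : ord0 != r1); have := diff_count_sumR ord0 r1.
  by rewrite x1; lra.
apply: (not_all_three_odd_differences E_lt3) => r s rs.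
have := orth_cos_eq rs; have := diff_count_sumR r s; rewrite xN1 => sum6 e1.
by apply/eqP; rewrite -(eqr_nat R) natrD; apply/eqP; lra.
Qed.

(* Cosines 1/4 and 1/2 would force, for every pair of rows, one coincidence
   resp. a balance between coincidences and differences +-2 that the
   column counts cannot sustain. *)
Lemma orth_exps_cos : x = 0 \/ x = - 2^-1.
Proof.
have y_neq0 := orth_exps_nonreal.
have y2_gt0 : 0 < y ^+ 2 by rewrite lt_def sqrf_eq0 y_neq0 sqr_ge0.
have x_bd : -1 < x < 1 by have x2y2 := xy1; apply/andP; split; nra.
have [r0 [s0 [rs0 c2_gt0]]] := exists_coincident_pair E_lt3.
have [x0|xN2|x4|x2] := cos_cases (diff_count_sum E_lt3 r0 s0) c2_gt0 x_bd
                               (orth_cos_eq rs0) (orth_sin_eq rs0 y_neq0).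
- by left.
- by right.
- exfalso; apply: (not_all_single_coincidences E_lt3) => r s rs.
  have := orth_cos_eq rs; have := diff_count_sumR r s; rewrite x4 => sum6 e1.
  have : ((2 * diff_count E r s 2 + 4)%N)%:R
       = ((3 * (diff_count E r s 0 + diff_count E r s 4))%N)%:R :> R.
    by rewrite !natrD ?natrM; lra.
  by move/eqP; rewrite eqr_nat => /eqP; have := diff_count_sum E_lt3 r s; lia.
- exfalso; apply: (not_all_half_balanced E_lt3) => r s rs.
  have := orth_cos_eq rs; have := diff_count_sumR r s; rewrite x2 => sum6 e1.
  by apply/eqP; rewrite -(eqr_nat R) !natrD ?natrM; apply/eqP; lra.
Qed.

End OrthogonalExponentRows.

Lemma orth_exps_root_cases (R : realType) (a : R[i]) (E : 'I_6 -> 'I_6 -> nat) :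
  `|a| = 1 -> (forall i j, (E i j < 3)%N) ->
  (forall r s, r != s -> \sum_(j < 6) a ^+ E r j * Num.conj (a ^+ E s j) = 0) ->
  (a = 'i \/ a = 'i ^+ 3) \/ (a = omega R \/ a = omega R ^+ 2).
Proof.
case: a => x y a1 E_lt3 orth.
have xy1 : x ^+ 2 + y ^+ 2 = 1.
  have := normCK (x +i* y); rewrite a1 expr1n => /(congr1 (@complex.Re R)) /= ->.
  by ring.
have [x0|xN2] := orth_exps_cos E_lt3 xy1 orth.
- left; rewrite x0; have /eqP : y ^+ 2 = 1 ^+ 2 by move: xy1; rewrite x0; nra.
  by rewrite eqf_sqr => /orP[/eqP ->|/eqP ->]; [left | right; rewrite i3].
- right; rewrite xN2; have /eqP : y ^+ 2 = (Num.sqrt 3 / 2) ^+ 2.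
    by rewrite expr_div_n sqr_sqrt3; move: xy1; rewrite xN2; nra.
  by rewrite eqf_sqr => /orP[/eqP ->|/eqP ->]; [left | right; rewrite omega2].
Qed.

Section DephasedSearch.
Local Open Scope nat_scope.

Definition entry (L : seq (seq nat)) i j := nth 0 (nth [::] L i) j.

(* Exponent multisets of the vanishing sums of six cube roots (m = 3),
   resp. fourth roots (m = 4), of unity. *)
Definition vanishing_pattern m (d : seq nat) : bool :=
  if m == 3 then [&& count_mem 0 d == 2, count_mem 1 d == 2 & count_mem 2 d == 2]
  else (count_mem 0 d == count_mem 2 d) && (count_mem 1 d == count_mem 3 d).

Definition orth_exps m (r s : seq nat) : bool :=
  vanishing_pattern m [seq (xy.1 + (m - xy.2)) %% m | xy <- zip r s].

Definition dephased_rows m : seq (seq nat) :=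
  [seq r <- tuples 6 m | (head 1 r == 0) && orth_exps m (nseq 6 0) r].

Fixpoint first_some {A B : Type} (f : A -> option B) (l : seq A) : option B :=
  if l is x :: l' then (if f x is Some b then Some b else first_some f l') else None.

Fixpoint arrangements k (l : seq nat) : seq (seq nat) :=
  if k is k'.+1 then flatten [seq [seq x :: p | p <- arrangements k' (rem x l)] | x <- l]
  else [:: [::]].

Definition dephase_at m (T : seq (seq nat)) q : seq (seq nat) :=
  [seq [seq (entry T i c + (m - entry T i q) + (m - entry T 0 c) + entry T 0 q) %% m
       | c <- iota 0 6] | i <- iota 0 6].

Definition columns (L : seq (seq nat)) : seq (seq nat) :=
  [seq [seq entry L i j | i <- iota 0 6] | j <- iota 0 6].

Fixpoint match_columns (Pc vs : seq (seq nat)) : option (seq nat) :=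
  if vs is v :: vs' then
    let c := index v Pc in
    if c < 6 then (if match_columns Pc vs' is Some cs then Some (c :: cs) else None)
    else None
  else Some [::].

(* Looks for row and column arrangements [sg], [tau] of [T] matching [L],
   trying only those that send row 0 to row 0 and column 0 to column 1 or 0. *)
Definition find_equiv m T L : option (seq nat * seq nat) :=
  first_some (fun q =>
    let Tq := dephase_at m T q in
    first_some (fun pr =>
      let sg := 0 :: pr in
      let Pc := [seq [seq entry Tq i c | i <- sg] | c <- iota 0 6] in
      if match_columns Pc (behead (columns L)) is Some cs then Some (sg, q :: cs)
      else None) (arrangements 5 (iota 1 5))) [:: 1; 0].

Definition index_perm (s : seq nat) :=
  [&& size s == 6, uniq s & all (fun x => x < 6) s].

Definition equiv_cert m T L (sg tau : seq nat) : bool :=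
  let t i j := entry T (nth 0 sg i) (nth 0 tau j) in
  [&& index_perm sg, index_perm tau &
   all (fun i => all (fun j =>
     entry L i j == (t i j + (m - t i 0) + (m - t 0 j) + t 0 0) %% m)
     (iota 0 6)) (iota 0 6)].

Definition classified m T : bool :=
  let zeros := nseq 6 0 in
  all (fun r1 => let R1 := [seq r <- dephased_rows m | orth_exps m r1 r] in
   all (fun r2 => let R2 := [seq r <- R1 | orth_exps m r2 r] in
   all (fun r3 => let R3 := [seq r <- R2 | orth_exps m r3 r] in
   all (fun r4 => let R4 := [seq r <- R3 | orth_exps m r4 r] in
   all (fun r5 => let L := [:: zeros; r1; r2; r3; r4; r5] in
     if find_equiv m T L is Some (sg, tau) then equiv_cert m T L sg tau else false)
   R4) R3) R2) R1) (dephased_rows m).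

Lemma classified_sound m T L :
  classified m T -> size L = 6 -> nth [::] L 0 = nseq 6 0 ->
  (forall i, 0 < i < 6 -> nth [::] L i \in dephased_rows m) ->
  (forall i k, 0 < i -> i < k < 6 -> orth_exps m (nth [::] L i) (nth [::] L k)) ->
  exists sg tau, equiv_cert m T L sg tau.
Proof.
move=> /allP cl; case: L => [|l0 [|l1 [|l2 [|l3 [|l4 [|l5 [|? ?]]]]]]] //.
move=> _ /= -> rows orth.
have /allP cl1 := cl l1 (rows 1 isT).
have /allP cl2 := cl1 l2 ltac:(by rewrite mem_filter /= (orth 1 2) ?(rows 2)).
have /allP cl3 := cl2 l3
  ltac:(by rewrite 2!mem_filter /= (orth 1 3) ?(orth 2 3) ?(rows 3)).
have /allP cl4 := cl3 l4
  ltac:(by rewrite 3!mem_filter /= (orth 1 4) ?(orth 2 4) ?(orth 3 4) ?(rows 4)).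
have := cl4 l5 ltac:(by rewrite 4!mem_filter /= (orth 1 5) ?(orth 2 5) ?(orth 3 5)
                                   ?(orth 4 5) ?(rows 5)).
by rewrite /=; case: find_equiv => [[sg tau] cert|] //; exists sg, tau.
Qed.

Definition H6_1_exps : seq (seq nat) :=
  [:: [:: 1; 0; 0; 0; 0; 0];
      [:: 0; 1; 0; 0; 2; 2];
      [:: 0; 0; 1; 2; 0; 2];
      [:: 0; 0; 2; 1; 2; 0];
      [:: 0; 2; 0; 2; 1; 0];
      [:: 0; 2; 2; 0; 0; 1]].

Lemma classified_S6_0 : classified 3 S6_exps.
Proof. by vm_compute. Qed.

Lemma classified_H6_1 : classified 4 H6_1_exps.
Proof. by vm_compute. Qed.

End DephasedSearch.

Section Dephasing.
Local Open Scope nat_scope.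
Variables (m : nat) (F : 'I_6 -> 'I_6 -> nat).
Hypothesis F_lt : forall i j, F i j < m.

Definition dephase i j := (F i j + (m - F i ord0) + (m - F ord0 j) + F ord0 ord0) %% m.

Lemma dephase_row0 j : dephase ord0 j = 0.
Proof.
rewrite /dephase (_ : _ + _ = m * 2) ?modnMr //.
by have := F_lt ord0 j; have := F_lt ord0 ord0; lia.
Qed.

Lemma dephase_col0 i : dephase i ord0 = 0.
Proof.
rewrite /dephase (_ : _ + _ = m * 2) ?modnMr //.
by have := F_lt i ord0; have := F_lt ord0 ord0; lia.
Qed.

Lemma dephase_congr i j :
  F i j = dephase i j + (F i ord0 + F ord0 j + (m - F ord0 ord0)) %[mod m].
Proof.
rewrite /dephase modnDml -[LHS](modnMDl 3); congr (_ %% m).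
by have := F_lt i ord0; have := F_lt ord0 j; have := F_lt ord0 ord0; lia.
Qed.

Definition dephased_exps : seq (seq nat) :=
  mkseq (fun i => mkseq (fun j => dephase (inord i) (inord j)) 6) 6.

Lemma entry_dephased_exps (i j : 'I_6) : entry dephased_exps i j = dephase i j.
Proof. by rewrite /entry !nth_mkseq // !inord_val. Qed.

End Dephasing.

Definition perm_of (s : seq nat) (i : 'I_6) : 'I_6 := inord (nth 0%N s i).

Lemma perm_ofE s i : index_perm s -> perm_of s i = nth 0%N s i :> nat.
Proof.
case/and3P => /eqP sz _ /allP s_lt; rewrite inordK //.
by apply: s_lt; rewrite mem_nth ?sz.
Qed.

Lemma perm_of_inj s : index_perm s -> injective (perm_of s).
Proof.
move=> s_perm i j /(congr1 (@nat_of_ord 6)); rewrite !perm_ofE //.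
case/and3P: s_perm => /eqP sz s_uniq _ /eqP.
by rewrite nth_uniq ?sz // => /eqP /val_inj.
Qed.

Section Classification.
Variables (R : realType) (z : R[i]) (m : nat).
Hypotheses (z1 : `|z| = 1) (zm : z ^+ m = 1) (m_gt0 : (0 < m)%N).
Hypothesis vanishing : forall d : seq nat, size d = 6%N -> all (fun x => x < m)%N d ->
  \sum_(x <- d) z ^+ x = 0 -> vanishing_pattern m d.

Lemma pow_mul_conj_mod a b : (b < m)%N ->
  z ^+ a * Num.conj (z ^+ b) = z ^+ ((a + (m - b)) %% m).
Proof.
move=> b_lt; have zb1 : `|z ^+ b| = 1 by rewrite normrX z1 expr1n.
have -> : Num.conj (z ^+ b) = z ^+ (m - b).
  apply: (mulfI (norm1_neq0 zb1)).
  by rewrite mul_conj_norm1 // -exprD subnKC ?zm // ltnW.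
by rewrite -exprD expr_mod.
Qed.

Lemma orth_exps_mkseq (f g : nat -> nat) : (forall j, g j < m)%N ->
  \sum_(j < 6) z ^+ f j * Num.conj (z ^+ g j) = 0 ->
  orth_exps m (mkseq f 6) (mkseq g 6).
Proof.
move=> g_lt orth; apply: vanishing.
- by rewrite size_map size_zip !size_mkseq.
- by apply/allP => _ /mapP [xy _ ->]; rewrite ltn_mod.
rewrite -[RHS]orth /mkseq zip_map big_map big_map -/(index_iota 0 6) big_mkord.
by apply: eq_bigr => j _; rewrite pow_mul_conj_mod.
Qed.

Section Exponents.
Variables (T : seq (seq nat)) (F : 'I_6 -> 'I_6 -> nat).
Hypothesis F_lt : forall i j, (F i j < m)%N.
Hypothesis orth : forall r s, r != s ->
  \sum_(j < 6) z ^+ F r j * Num.conj (z ^+ F s j) = 0.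

Lemma orth_dephase r s : r != s ->
  \sum_(j < 6) z ^+ dephase m F r j * Num.conj (z ^+ dephase m F s j) = 0.
Proof.
move=> rs; pose al i := z ^+ (m - F i ord0).
pose be j := z ^+ (m - F ord0 j + F ord0 ord0).
rewrite (eq_bigr (fun j =>
  al r * be j * z ^+ F r j * Num.conj (al s * be j * z ^+ F s j))).
  rewrite (orth_rows_scale (fun i j => z ^+ F i j) al) ?orth ?mulr0 //.
  by move=> j; rewrite normrX z1 expr1n.
by move=> j _; rewrite /al /be /dephase !expr_mod // !exprD !rmorphM /=; ring.
Qed.

Lemma dephased_equiv_cert :
  classified m T -> exists sg tau, equiv_cert m T (dephased_exps m F) sg tau.
Proof.
move=> cl; set D := dephase m F.
pose row i := mkseq (fun j => D (inord i) (inord j)) 6.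
have rowE i : (i < 6)%N -> nth [::] (dephased_exps m F) i = row i.
  by move=> ?; rewrite nth_mkseq.
have ord0E : inord 0 = ord0 :> 'I_6 by apply: ord_inj; rewrite inordK.
have orth_rows i k : (i < 6)%N -> (k < 6)%N -> i != k -> orth_exps m (row i) (row k).
  move=> i_lt k_lt ik; apply: orth_exps_mkseq => [j|]; first by rewrite ltn_mod.
  rewrite -[RHS](orth_dephase (r := inord i) (s := inord k)).
    by apply: eq_bigr => j _; rewrite inord_val.
  by apply: contra ik => /eqP/(congr1 val); rewrite /= !inordK // => ->.
have row0 : row 0 = nseq 6 0.
  apply: (@eq_from_nth _ 0%N) => [|j]; rewrite size_mkseq ?size_nseq // => j_lt.
  by rewrite nth_mkseq // nth_nseq j_lt ord0E; apply: dephase_row0.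
apply: classified_sound => // [i /andP[i_gt0 i_lt6] | i k i_gt0 /andP[ik k_lt6]].
  rewrite rowE // mem_filter -andbA; apply/and3P; split.
  - by rewrite /row /= ord0E; apply/eqP/dephase_col0.
  - by rewrite -row0 orth_rows // eq_sym -lt0n.
  - apply: mem_tuples; first exact: size_mkseq.
    by apply/allP => _ /mapP[j _ ->]; rewrite ltn_mod.
by rewrite !rowE ?orth_rows ?(ltn_trans ik) // neq_ltn ik.
Qed.

End Exponents.

Lemma complex_equiv_classified T (F : 'I_6 -> 'I_6 -> nat) :
  classified m T -> (forall i j, (F i j < m)%N) ->
  (forall r s, r != s -> \sum_(j < 6) z ^+ F r j * Num.conj (z ^+ F s j) = 0) ->
  complex_equiv (expmx z F) (expmx z (fun i j => entry T i j)).
Proof.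
move=> cl F_lt orth; have [sg [tau]] := dephased_equiv_cert F_lt orth cl.
case/and3P => sg_perm tau_perm /allP cert.
pose t i j := entry T (perm_of sg i) (perm_of tau j).
apply: (@complex_equiv_expmx _ _ z m F _ (perm_of sg) (perm_of tau)
  (fun i => m - t i ord0 + F i ord0)%N
  (fun j => m - t ord0 j + t ord0 ord0 + F ord0 j + (m - F ord0 ord0))%N
  z1 zm (perm_of_inj sg_perm) (perm_of_inj tau_perm)) => i j.
have in_iota (k : 'I_6) : nat_of_ord k \in iota 0 6 by rewrite mem_iota ltn_ord.
have /allP/(_ _ (in_iota j))/eqP := cert _ (in_iota i).
rewrite entry_dephased_exps => Dij.
rewrite (dephase_congr F_lt) Dij modnDml /t !perm_ofE //.
by congr (_ %% m)%N; rewrite /=; lia.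
Qed.

End Classification.

Section VanishingSums.
Variable R : realType.
Local Notation C := R[i].

Lemma count_mem_sum (d : seq nat) k : count_mem k d = (\sum_(x <- d) (x == k))%N.
Proof. by elim: d => [|x d IH]; rewrite ?big_nil // big_cons /= IH. Qed.

Lemma sum_pow_counts (z : C) m (d : seq nat) : all (fun x => x < m)%N d ->
  \sum_(x <- d) z ^+ x = \sum_(k < m) (count_mem (k : nat) d)%:R * z ^+ k.
Proof.
move=> /allP d_lt; rewrite (@sum_by_value _ _ d id (fun k => z ^+ k) m) //.
by apply: eq_bigr => k _; rewrite count_mem_sum mulr_natl.
Qed.

Lemma sum_count_mem m (d : seq nat) : all (fun x => x < m)%N d ->
  (\sum_(k < m) count_mem (k : nat) d)%N = size d.
Proof.
move=> /allP d_lt; rewrite -(@sum_mult_size _ d id m) //.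
by apply: eq_bigr => k _; rewrite count_mem_sum.
Qed.

Lemma omega_vanishing (d : seq nat) : size d = 6%N -> all (fun x => x < 3)%N d ->
  \sum_(x <- d) omega R ^+ x = 0 -> vanishing_pattern 3 d.
Proof.
move=> sz d_lt; rewrite (sum_pow_counts _ d_lt) !big_ord_recl big_ord0 !lift0 /=.
rewrite expr0 expr1 omega2 => sum0.
have := congr1 (@complex.Re R) sum0; have := congr1 (@complex.Im R) sum0.
rewrite !ReD !ImD !Re_natrM !Im_natrM /= => im0 re0.
have s3_gt0 : 0 < Num.sqrt (3 : R) by rewrite sqrtr_gt0 ltr0n.
have c12 : (count_mem 1 d = count_mem 2 d)%N.
  apply/eqP; rewrite -(eqr_nat R); apply/eqP.
  have : ((count_mem 1%N d)%:R - (count_mem 2%N d)%:R) * (Num.sqrt 3 / 2) = 0 :> R.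
    by rewrite -[RHS]im0; ring.
  by move/eqP; rewrite mulf_eq0 => /orP[/eqP ?|/eqP ?]; lra.
have c01 : (count_mem 0 d = count_mem 1 d)%N.
  by apply/eqP; rewrite -(eqr_nat R); apply/eqP; rewrite c12 in re0 *; lra.
have := sum_count_mem d_lt; rewrite !big_ord_recl big_ord0 !lift0 /= sz => c6.
rewrite /vanishing_pattern /= c01 c12 in c6 *; set c := count_mem _ d in c6 *.
by rewrite !andbb; apply/eqP; lia.
Qed.

Lemma i_vanishing (d : seq nat) : size d = 6%N -> all (fun x => x < 4)%N d ->
  \sum_(x <- d) ('i : C) ^+ x = 0 -> vanishing_pattern 4 d.
Proof.
move=> sz d_lt; rewrite (sum_pow_counts _ d_lt) !big_ord_recl big_ord0 !lift0 /=.
rewrite expr0 expr1 sqr_i i3 => sum0.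
have := congr1 (@complex.Re R) sum0; have := congr1 (@complex.Im R) sum0.
rewrite !ReD !ImD !Re_natrM !Im_natrM /= => im0 re0.
by rewrite /vanishing_pattern /=; apply/andP; split; rewrite -(eqr_nat R); apply/eqP; lra.
Qed.

End VanishingSums.

Section Targets.
Variable R : realType.
Local Notation C := R[i].

Lemma S6_0E : S6_0 R = expmx (omega R) (fun i j => entry S6_exps i j).
Proof.
apply/matrixP => i j; rewrite !mxE.
by case: i => [[|[|[|[|[|[|i]]]]]] ?] //; case: j => [[|[|[|[|[|[|j]]]]]] ?].
Qed.

Lemma H6_1E : H6_1 R = expmx 'i (fun i j => entry H6_1_exps i j).
Proof.
apply/matrixP => i j; rewrite !mxE.
case: i => [[|[|[|[|[|[|i]]]]]] ?] //; case: j => [[|[|[|[|[|[|j]]]]]] ?] //=;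
  by rewrite ?sqr_i // -expr2 sqr_i.
Qed.

Lemma complex_equiv_classified_pow (z : C) m k T (E : 'I_6 -> 'I_6 -> nat) :
  `|z| = 1 -> z ^+ m = 1 -> (0 < m)%N ->
  (forall d : seq nat, size d = 6%N -> all (fun x => x < m)%N d ->
     \sum_(x <- d) z ^+ x = 0 -> vanishing_pattern m d) ->
  classified m T -> is_CHM (expmx (z ^+ k) E) ->
  complex_equiv (expmx (z ^+ k) E) (expmx z (fun i j => entry T i j)).
Proof.
move=> z1 zm m_gt0 vanishing cl; rewrite (expmx_pow _ _ zm) => CHM.
apply: (complex_equiv_classified z1 zm m_gt0 vanishing) => // [i j|r s].
  by rewrite ltn_mod.
by move=> rs; apply: (CHM_expmx_orth CHM rs).
Qed.

Lemma complex_equiv_H6_1 (z : C) k (E : 'I_6 -> 'I_6 -> nat) :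
  z = 'i ^+ k -> is_CHM (expmx z E) -> complex_equiv (expmx z E) (H6_1 R).
Proof.
move=> ->; rewrite H6_1E.
exact: (complex_equiv_classified_pow (norm_i R) (i4 R) isT (@i_vanishing R)
          classified_H6_1).
Qed.

Lemma complex_equiv_S6_0 (z : C) k (E : 'I_6 -> 'I_6 -> nat) :
  z = omega R ^+ k -> is_CHM (expmx z E) -> complex_equiv (expmx z E) (S6_0 R).
Proof.
move=> ->; rewrite S6_0E.
exact: (complex_equiv_classified_pow (norm_omega R) (omega3 R) isT (@omega_vanishing R)
          classified_S6_0).
Qed.

End Targets.

Theorem mainTheorem9 (R : realType) (a : R[i]) (H : 'M[R[i]]_6) :
  `|a| = 1 ->
  is_CHM H ->
  (forall i j, H i j \in [:: 1; a; a ^+ 2]) ->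
  complex_equiv H (S6_0 R) \/ complex_equiv H (H6_1 R).
Proof.
move=> a1 CHM /expmx_of_entries[E E_lt3 HE]; rewrite HE in CHM *.
have [[a_i|a_i]|[a_w|a_w]] :=
  orth_exps_root_cases a1 E_lt3 (fun r s => CHM_expmx_orth (r := r) (s := s) CHM).
- by right; apply: (complex_equiv_H6_1 (k := 1)); rewrite ?expr1.
- by right; apply: (complex_equiv_H6_1 (k := 3)).
- by left; apply: (complex_equiv_S6_0 (k := 1)); rewrite ?expr1.
- by left; apply: (complex_equiv_S6_0 (k := 2)).
Qed.
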